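(* Let $(G,I)$ be a single interval total sum game, i.e. $I$ is a single real interval. If Eve has a winning strategy then she has a finite memory winning strategy.
   Context: A game graph is a tuple $G=(V,V_\exists,E,w,q_0)$ where $(V,E)$ is a finite directed graph in which every vertex has an outgoing edge, $w:E\to\mathbb{Z}$ is an integer edge-weight function, $V_\exists\subseteq V$ are Eve's vertices (the rest are Adam's), and $q_0\in V$ the initial vertex. A play is an infinite path $\pi=v_0v_1\cdots$ with $v_0=q_0$; write $w(\pi[..k])=\sum_{i=0}^{k-1}w(v_i,v_{i+1})$. A strategy for a player maps finite play prefixes ending in one of that player's vertices to a successor vertex; it has finite memory if it can be realized as the output of a finite-state machine reading the play. The total sum payoff is $\underline{Total}(\pi)=\liminf_{k\to\infty}w(\pi[..k])\in\mathbb{Z}\cup\{\pm\infty\}$. A play is winning for Eve iff $\underline{Total}(\pi)\in I$; a strategy of Eve is winning if all consistent plays are winning for her. *)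

From HB Require Import structures.
From mathcomp Require Import all_boot all_order all_algebra.
From mathcomp Require Import all_classical all_reals all_analysis.
Set Implicit Arguments. Unset Strict Implicit. Unset Printing Implicit Defensive.
Import Order.TTheory GRing.Theory Num.Theory.
Local Open Scope ring_scope.

Section TotalGames.
Variable V : finType.

Definition is_play (E : rel V) (q0 : V) (p : nat -> V) : Prop :=
  p 0%N = q0 /\ forall k, E (p k) (p k.+1).

(* A strategy of Eve: given the history v_0 ... v_{k-1} and the current
   vertex v_k (in V_exists), it returns a successor vertex. *)
Definition strategy := seq V -> V -> V.

Definition is_strategy (E : rel V) (VE : {set V}) (sigma : strategy) : Prop :=
  forall h v, v \in VE -> E v (sigma h v).

Definition prefix (p : nat -> V) (k : nat) : seq V := [seq p i | i <- iota 0 k].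

Definition consistent (VE : {set V}) (sigma : strategy) (p : nat -> V) : Prop :=
  forall k, p k \in VE -> p k.+1 = sigma (prefix p k) (p k).

Definition finite_memory (sigma : strategy) : Prop :=
  exists (M : finType) (m0 : M) (upd : M -> V -> M) (out : M -> V -> V),
    forall h v, sigma h v = out (foldl upd m0 h) v.

Definition partial_weight (w : V -> V -> int) (p : nat -> V) (k : nat) : int :=
  \sum_(i < k) w (p i) (p i.+1).

Definition total {R : realType} (w : V -> V -> int) (p : nat -> V) : \bar R :=
  limn_einf (fun k => ((partial_weight w p k)%:~R : R)%:E).

Definition winning_play {R : realType} (I : interval R) (w : V -> V -> int)
  (p : nat -> V) : Prop :=
  exists x : R, total w p = x%:E /\ x \in I.

Definition winning_strategy {R : realType} (E : rel V) (VE : {set V})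
  (w : V -> V -> int) (q0 : V) (I : interval R) (sigma : strategy) : Prop :=
  is_strategy E VE sigma /\
  forall p, is_play E q0 p -> consistent VE sigma p -> winning_play I w p.

End TotalGames.

From Pilot Require Import Defs.
From HB Require Import structures.
From mathcomp Require Import all_boot all_order all_algebra.
From mathcomp Require Import all_classical all_reals all_analysis.
From mathcomp Require Import zify lra.

Set Implicit Arguments. Unset Strict Implicit. Unset Printing Implicit Defensive.
Import Order.TTheory GRing.Theory Num.Theory.

(* Eve plays her winning strategy sigma, but remembers only a sigma-consistent
   history from which the cycles she can afford to forget have been erased.
   A leaf of a history l is an index i such that l ends at the vertex l_i with
   the same running weight as at i, this weight lies in I, and no running
   weight in between falls below it: looping through that cycle forever would
   give total sum w(l[..i]) in I.  Leaf-free sigma-consistent histories have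
   bounded length: otherwise, by Koenig's lemma, some infinite sigma-consistent
   play has only leaf-free prefixes; it is winning, so its running weight has an
   integer liminf N in I which is eventually a lower bound and is attained
   infinitely often, hence twice at the same vertex, and this is a leaf.  So the
   memory ranges over a finite set.  Along a play consistent with the new
   strategy the memory carries the true running weight, and its size drops back
   infinitely often to its liminf; such a drop erases a leaf whose base weight
   is at most, and eventually at least, the liminf m of the running weights.
   Hence the total sum is m, which lies in I. *)

Lemma io_pigeonhole (T : finType) (f : nat -> T) (P : nat -> Prop) :
  (forall K, exists2 k, K <= k & P k) ->
  exists x, forall K, exists2 k, K <= k & P k /\ f k = x.
Proof.
move=> ioP; apply: contrapT => no_x.
have last_visit x : exists K, forall k, K <= k -> P k -> f k <> x.
  apply: contrapT => io_x; apply: no_x; exists x => K.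
  apply: contrapT => no_k; apply: io_x; exists K => k Kk Pk fkx.
  by apply: no_k; exists k.
have [g Hg] := choice last_visit.
have [k Kk Pk] := ioP (\max_(x : T) g x).
apply: (Hg (f k) k _ Pk erefl).
exact: leq_trans (leq_bigmax (f k)) Kk.
Qed.

Section EventualMin.
Context {disp : Order.disp_t} {X : orderType disp}.

Definition eventual_min (u : nat -> X) (m : X) : Prop :=
  (exists K, forall k, K <= k -> (m <= u k)%O) /\
  (forall K, exists2 k, K <= k & u k = m).

Lemma fin_eventual_min (T : finType) (g : nat -> T) (F : T -> X) :
  exists m, eventual_min (F \o g) m.
Proof.
pose io x := forall K, exists2 k, K <= k & g k = x.
pose Y := [pred x | `[< io x >]].
have [x0 io_x0] : exists x, io x.
  have [x Hx] := @io_pigeonhole T g (fun _ => True) (fun K => ex_intro2 _ _ K (leqnn K) I).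
  by exists x => K; have [k Kk [_ gk]] := Hx K; exists k.
have last_visit x : exists K, x \notin Y -> forall k, K <= k -> g k <> x.
  have [io_x|not_io_x] := pselect (io x).
    by exists 0 => /negP[]; apply/asboolP.
  apply: contrapT => no_K; apply: not_io_x => K; apply: contrapT => no_k.
  by apply: no_K; exists K => _ k Kk gk; apply: no_k; exists k.
have [h Hh] := choice last_visit.
have x0Y : x0 \in Y by apply/asboolP.
case: (Order.TotalTheory.arg_minP F x0Y) => xm /asboolP io_xm xm_min.
exists (F xm); split => [|K]; last by have [k Kk <-] := io_xm K; exists k.
exists (\max_(x : T) h x) => k Kk; apply: xm_min.
apply: contraT => gkY; case: (Hh _ gkY k _ erefl).
exact: leq_trans (leq_bigmax (g k)) Kk.
Qed.

End EventualMin.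

Section LimInfInt.
Local Open Scope ring_scope.
Local Open Scope ereal_scope.
Variable R : realType.

Lemma limn_einf_ereal_sup (u : (\bar R)^nat) :
  limn_einf u = ereal_sup (range (einfs u)).
Proof. by rewrite limn_einf_lim; apply: cvg_lim => //; exact: cvg_einfs_sup. Qed.

Lemma limn_einf_int (S : nat -> int) (m : int) : eventual_min S m ->
  limn_einf (fun k => (S k)%:~R%:E) = (m%:~R : R)%:E.
Proof.
move=> [[K HK] ioS]; rewrite limn_einf_ereal_sup; apply/eqP; rewrite eq_le.
apply/andP; split.
- apply: ge_ereal_sup => _ [n _ <-].
  have [k nk Skm] := ioS n.
  by rewrite -Skm; apply: ereal_inf_lbound; exists k.
- apply: (@le_trans _ _ (einfs (fun k => (S k)%:~R%:E) K)).
    by apply: le_ereal_inf_tmp => _ [k /= Kk <-]; rewrite lee_fin ler_int HK.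
  by apply: ereal_sup_ubound; exists K.
Qed.

Lemma limn_einf_int_fin (S : nat -> int) (x : R) :
  limn_einf (fun k => (S k)%:~R%:E) = x%:E ->
  exists2 N : int, x = N%:~R & eventual_min S N.
Proof.
(* Eventually [x - 1/2 < S k], and infinitely often [S k < x + 1/2]. *)
set u := fun k => (S k)%:~R%:E => ux.
have supx := ux; rewrite limn_einf_ereal_sup in supx.
have [_ [K _ <-] HK] : exists2 y, range (einfs u) y & (x - 2^-1)%:E < y.
  by apply: ereal_sup_gt; rewrite supx lte_fin; lra.
have above k : (K <= k)%N -> (x - 2^-1 < (S k)%:~R)%R.
  by move=> Kk; rewrite -lte_fin; apply: (lt_le_trans HK); apply: ereal_inf_lbound; exists k.
have below n : exists2 k, (n <= k)%N & ((S k)%:~R < x + 2^-1)%R.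
  have : einfs u n < (x + 2^-1)%:E.
    apply: (@le_lt_trans _ _ x%:E); last by rewrite lte_fin; lra.
    by rewrite -supx; apply: ereal_sup_ubound; exists n.
  by move=> /ereal_inf_lt [_ [k /= nk <-]]; rewrite lte_fin; exists k.
have [k0 Kk0 Sk0] := below K.
have Sk0_min k : (K <= k)%N -> (S k0 <= S k)%R.
  move=> Kk; have : ((S k0 - 1)%:~R < (S k)%:~R :> R)%R.
    by rewrite rmorphB /=; have := above k Kk; have := above k0 Kk0; lra.
  by rewrite ltr_int; lia.
have io_Sk0 n : exists2 k, (n <= k)%N & S k = S k0.
  have [k nk Sk] := below (maxn n K); exists k; first exact: leq_trans (leq_maxl _ _) nk.
  have Kk : (K <= k)%N := leq_trans (leq_maxr _ _) nk.
  have : ((S k)%:~R < (S k0 + 1)%:~R :> R)%R.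
    by rewrite rmorphD /=; have := above k0 Kk0; lra.
  by rewrite ltr_int; have := Sk0_min k Kk; lia.
have Sk0_evmin : eventual_min S (S k0) by split; [exists K|].
exists (S k0) => //.
by move: (limn_einf_int Sk0_evmin); rewrite -/u ux => -[].
Qed.

End LimInfInt.

Section Prefix.
Variables (T : finType) (p : nat -> T).

Lemma prefixS k : Defs.prefix p k.+1 = rcons (Defs.prefix p k) (p k).
Proof. by rewrite /Defs.prefix -addn1 iotaD map_cat cats1. Qed.

Lemma size_prefix k : size (Defs.prefix p k) = k.
Proof. by rewrite size_map size_iota. Qed.

Lemma nth_prefix x0 k i : i < k -> nth x0 (Defs.prefix p k) i = p i.
Proof. by move=> ik; rewrite (nth_map 0) ?size_iota // nth_iota. Qed.

Lemma take_prefix n k : n <= k -> take n (Defs.prefix p k) = Defs.prefix p n.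
Proof. by move=> nk; rewrite /Defs.prefix -map_take take_iota (minn_idPl nk). Qed.

Lemma last_prefix x0 k : last x0 (Defs.prefix p k.+1) = p k.
Proof. by rewrite prefixS last_rcons. Qed.

End Prefix.

Section Koenig.
Variables (T : finType) (P : seq T -> Prop).
Hypothesis P_take : forall s n, P s -> P (take n s).

Lemma koenig : (forall D, exists2 s, P s & D < size s) ->
  exists p : nat -> T, forall k, P (Defs.prefix p k).
Proof.
move=> unbounded; have [s0 _] := unbounded 0; case: s0 => // x0 _ _.
pose ext s := forall D, exists s', [/\ P s', D < size s' & take (size s) s' = s].
have ext_nil : ext [::].
  by move=> D; have [s' Ps' Ds'] := unbounded D; exists s'; split; rewrite ?take0.
have extP s : ext s -> P s by move=> /(_ 0) [s' [Ps' _ <-]]; exact: P_take.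
have ext_rcons s : ext s -> exists v, ext (rcons s v).
  move=> ext_s; apply: contrapT => no_v.
  have bound v : exists Dv, forall s', P s' -> Dv < size s' ->
      take (size s).+1 s' <> rcons s v.
    apply: contrapT => unb_v; apply: no_v; exists v => D.
    apply: contrapT => no_s'; apply: unb_v; exists D => s' Ps' Ds' ts'.
    by apply: no_s'; exists s'; rewrite size_rcons.
  have [g Hg] := choice bound.
  have [s' [Ps' Ds' ts']] := ext_s (maxn (size s) (\max_v g v)).
  have ss' : size s < size s' := leq_ltn_trans (leq_maxl _ _) Ds'.
  apply: (Hg (nth x0 s' (size s)) s' Ps').
    exact: leq_ltn_trans (leq_trans (leq_bigmax _) (leq_maxr _ _)) Ds'.
  by rewrite (take_nth x0) // ts'.
have step s : exists v, ext s -> ext (rcons s v).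
  by have [/ext_rcons[v]|] := pselect (ext s); [exists v | exists x0].
have [f Hf] := choice step.
pose br := fix br k := if k is k'.+1 then rcons (br k') (f (br k')) else [::].
have ext_br k : ext (br k) by elim: k => //= k; exact: Hf.
exists (fun k => f (br k)) => k; apply: extP.
suff -> : Defs.prefix (fun k => f (br k)) k = br k by [].
by elim: k => //= k IH; rewrite prefixS IH.
Qed.

End Koenig.

Section Game.
Variables (R : realType) (V : finType) (E : rel V) (VE : {set V}).
Variables (w : V -> V -> int) (q0 : V) (I : interval R).

Definition path_weight (s : seq V) : int := partial_weight w (nth q0 s) (size s).-1.

Lemma path_weight_rcons s v : s != [::] ->
  path_weight (rcons s v) = (path_weight s + w (last q0 s) v)%R.
Proof.
case: s => // a s _; rewrite /path_weight /partial_weight size_rcons /= big_ord_recr /=.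
congr (_ + _)%R.
  by apply: eq_bigr => i _; rewrite -rcons_cons !nth_rcons /= ltnS ltn_ord ltnW.
by rewrite -rcons_cons !nth_rcons /= ltnSn ltnn eqxx -[size s]/((size (a :: s)).-1) nth_last.
Qed.

Lemma path_weight_prefix (p : nat -> V) k :
  path_weight (Defs.prefix p k.+1) = partial_weight w p k.
Proof.
rewrite /path_weight size_prefix; apply: eq_bigr => i _.
by rewrite !nth_prefix // ltnS ?ltn_ord // ltnW.
Qed.

Definition is_leaf (l : seq V) (i : nat) : Prop :=
  [/\ i.+1 < size l, nth q0 l i = last q0 l,
      path_weight (take i.+1 l) = path_weight l,
      (path_weight (take i.+1 l))%:~R%R \in I &
      forall n, i.+1 <= n <= size l -> (path_weight (take i.+1 l) <= path_weight (take n l))%R].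

Definition leaf_free (s : seq V) : Prop := forall n i, ~ is_leaf (take n s) i.

Lemma leaf_free_take s n : leaf_free s -> leaf_free (take n s).
Proof. by move=> lf m i; rewrite -take_min; apply: lf. Qed.

Definition trim (l : seq V) : seq V :=
  if pselect (exists i, is_leaf l i) is left leaf then take (proj1_sig (cid leaf)).+1 l
  else l.

Variant trim_spec (l : seq V) : seq V -> Prop :=
  | TrimLeafFree of ~ (exists i, is_leaf l i) : trim_spec l l
  | TrimLeaf i of is_leaf l i : trim_spec l (take i.+1 l).

Lemma trimP l : trim_spec l (trim l).
Proof.
rewrite /trim; case: pselect => [leaf|]; last exact: TrimLeafFree.
by case: (cid leaf) => i /= ?; apply: TrimLeaf.
Qed.

Lemma take_size_trim l : take (size (trim l)) l = trim l.
Proof. by case: trimP => [_|i [il _ _ _ _]]; rewrite ?take_size // size_takel // ltnW. Qed.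

Lemma path_weight_trim l : path_weight (trim l) = path_weight l.
Proof. by case: trimP => // i []. Qed.

Lemma last_trim l : last q0 (trim l) = last q0 l.
Proof. by case: trimP => // i [il <- _ _ _]; rewrite (take_nth q0) ?last_rcons // ltnW. Qed.

Lemma trim_neq0 l : l != [::] -> trim l != [::].
Proof. by case: trimP => // i [il _ _ _ _]; rewrite -!size_eq0 size_takel // ltnW. Qed.

Definition mem_update (m : seq V) (v : V) : seq V := trim (rcons m v).

Lemma last_mem_update m v : last q0 (mem_update m v) = v.
Proof. by rewrite /mem_update last_trim last_rcons. Qed.

Lemma mem_update_neq0 m v : mem_update m v != [::].
Proof. by apply: trim_neq0; rewrite -size_eq0 size_rcons. Qed.

Lemma path_weight_mem_update m v : m != [::] ->
  path_weight (mem_update m v) = (path_weight m + w (last q0 m) v)%R.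
Proof. by move=> m0; rewrite /mem_update path_weight_trim path_weight_rcons. Qed.

Lemma mem_update_shrink m v l : take (size l) m = l ->
  size (mem_update m v) <= size l ->
  (path_weight (mem_update m v) <= path_weight l)%R /\ (path_weight (mem_update m v))%:~R%R \in I.
Proof.
move=> lm; have ml : size l <= size m by rewrite -{1}lm size_take_min geq_minr.
rewrite /mem_update; case: trimP => [_|i [il _ _ wI wmin]].
  by rewrite size_rcons leqNgt ltnS ml.
rewrite size_takel => [il_l|]; last exact: ltnW.
split=> //.
rewrite -lm -(takel_cat [:: v] ml) cats1.
by apply: wmin; rewrite il_l size_rcons leqW.
Qed.

Lemma mem_updates_keep_prefix (s : nat -> seq V) (x : nat -> V) k0 u :
  (forall k, s k.+1 = mem_update (s k) (x k)) ->
  (forall j, k0 < j < u -> size (s k0) < size (s j)) ->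
  forall j, k0 <= j < u -> take (size (s k0)) (s j) = s k0.
Proof.
move=> sS grows; elim=> [|j IH] /andP[k0j ju].
  by move: k0j; rewrite leqn0 => /eqP ->; rewrite take_size.
move: k0j; rewrite leq_eqVlt => /orP[/eqP <-|k0j]; first by rewrite take_size.
have {}IH : take (size (s k0)) (s j) = s k0 by apply: IH; rewrite -ltnS k0j ltnW.
have sk0j : size (s k0) <= size (s j) by rewrite -{1}IH size_take_min geq_minr.
have -> : s j.+1 = take (size (s j.+1)) (rcons (s j) (x j)).
  by rewrite sS /mem_update take_size_trim.
rewrite take_takel; last by apply: ltnW; apply: grows; rewrite k0j.
by rewrite -cats1 takel_cat.
Qed.

Lemma bounded_memory_eventual_min (D : nat) (s : nat -> seq V) (x : nat -> V) :
  (forall k, size (s k) <= D) -> (forall k, s k.+1 = mem_update (s k) (x k)) ->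
  exists2 m : int, m%:~R%R \in I & eventual_min (path_weight \o s) m.
Proof.
move=> s_le sS; pose b k : {bseq D of V} := insub_bseq D (s k).
have comp_b (X : Type) (F : seq V -> X) : (fun u : {bseq D of V} => F u) \o b = F \o s.
  by apply: funext => k /=; rewrite /b /insub_bseq insubdK //; apply: s_le.
have [m] := fin_eventual_min b (fun u : {bseq D of V} => path_weight u).
rewrite comp_b => -[[K2 m_low] m_io]; exists m; last by split; [exists K2|].
have [d] := fin_eventual_min b (fun u : {bseq D of V} => size u).
rewrite comp_b => -[[K0 d_low] d_io].
have [k0 Kk0 /= Wk0] := m_io (maxn K0 K2).
(* The first time after [k0] that the memory is no longer than [s k0], it has
   just erased a leaf based inside [s k0]. *)
have shrinks : exists u, (k0 < u) && (size (s u) <= size (s k0)).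
  have [u k0u /= su] := d_io k0.+1; exists u; rewrite k0u su.
  by apply: d_low; apply: leq_trans Kk0; apply: leq_maxl.
case: (ex_minnP shrinks) => -[//|t] /andP[k0t st_le] t_min.
have keep_t : take (size (s k0)) (s t) = s k0.
  apply: (mem_updates_keep_prefix (u := t.+1) sS); last by rewrite -ltnS k0t /=.
  move=> j /andP[k0j jt]; rewrite ltnNge; apply/negP => sj.
  by have := t_min j; rewrite k0j sj leqNgt jt => /(_ isT).
have [le_m wI] : (path_weight (s t.+1) <= path_weight (s k0))%R /\
                  (path_weight (s t.+1))%:~R%R \in I.
  by rewrite sS; apply: mem_update_shrink keep_t _; rewrite -sS.
have m_t : (m <= path_weight (s t.+1))%R.
  by apply: m_low; apply: leq_trans (leq_maxr K0 K2) _; apply: leq_trans Kk0 (ltnW k0t).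
by have -> : m = path_weight (s t.+1) by apply/le_anti; rewrite m_t -Wk0.
Qed.

Lemma winning_play_leaf (p : nat -> V) :
  winning_play I w p -> exists n i, is_leaf (Defs.prefix p n) i.
Proof.
move=> [x [tot xI]].
have [N xN [[K N_low] N_io]] := limn_einf_int_fin tot.
have io_N K' : exists2 k, K' <= k & K <= k /\ partial_weight w p k = N.
  have [k Kk Wk] := N_io (maxn K K'); exists k; first exact: leq_trans (leq_maxr _ _) Kk.
  by split=> //; apply: leq_trans (leq_maxl _ _) Kk.
have [v io_v] := io_pigeonhole p io_N.
have [k1 _ [[Kk1 W1] pk1]] := io_v 0.
have [k2 k12 [[_ W2] pk2]] := io_v k1.+1.
have take_k1 : take k1.+1 (Defs.prefix p k2.+1) = Defs.prefix p k1.+1.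
  by rewrite take_prefix // ltnW.
exists k2.+1, k1; split.
- by rewrite size_prefix.
- by rewrite nth_prefix ?last_prefix ?pk1 ?pk2 // ltnS ltnW.
- by rewrite take_k1 !path_weight_prefix W1 W2.
- by rewrite take_k1 path_weight_prefix W1 -xN.
- move=> [|n] /andP[k1n]; rewrite // size_prefix => nk2.
  rewrite take_k1 take_prefix // !path_weight_prefix W1.
  by apply: N_low; apply: leq_trans Kk1 _.
Qed.

Variable sigma : strategy V.

Definition consistent_path (s : seq V) : Prop :=
  nth q0 s 0 = q0 /\ forall t, t.+1 < size s ->
    E (nth q0 s t) (nth q0 s t.+1) /\
    (nth q0 s t \in VE -> nth q0 s t.+1 = sigma (take t s) (nth q0 s t)).

Lemma consistent_path_take s n : consistent_path s -> consistent_path (take n s).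
Proof.
move=> [s0 s_cons]; split; first by case: n => [|n]; [case: s s0 {s_cons} | rewrite nth_take].
move=> t; rewrite size_take_min leq_min => /andP[tn ts].
by rewrite !nth_take ?take_takel // ?(ltnW tn) //; [exact: s_cons | exact: ltnW (ltnW tn)].
Qed.

Lemma consistent_path_rcons s v : consistent_path s -> s != [::] ->
  E (last q0 s) v -> (last q0 s \in VE -> v = sigma (take (size s).-1 s) (last q0 s)) ->
  consistent_path (rcons s v).
Proof.
move=> [s0 s_cons] sn0 Ev sigma_v; split; first by case: s sn0 s0 {s_cons Ev sigma_v}.
move=> t; rewrite size_rcons ltnS leq_eqVlt => /orP[/eqP tn|tn].
  rewrite !nth_rcons -tn ltnn eqxx ltnSn -cats1 takel_cat -?tn //.
  by rewrite (_ : t = (size s).-1) ?nth_last // -tn.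
rewrite !nth_rcons tn ltnW // -cats1 takel_cat; last exact: ltnW (ltnW tn).
exact: s_cons.
Qed.

Lemma consistent_path_prefix (p : nat -> V) :
  (forall k, consistent_path (Defs.prefix p k)) -> is_play E q0 p /\ consistent VE sigma p.
Proof.
move=> p_cons.
have step k : E (p k) (p k.+1) /\ (p k \in VE -> p k.+1 = sigma (Defs.prefix p k) (p k)).
  have := (p_cons k.+2).2 k; rewrite size_prefix !nth_prefix // => /(_ (ltnSn _)).
  by rewrite take_prefix // leqW.
split; last by move=> k /(step k).2.
by split=> [|k]; [have [] := p_cons 1; rewrite nth_prefix | exact: (step k).1].
Qed.

Definition reduced (s : seq V) : Prop := consistent_path s /\ leaf_free s.

Lemma reduced_take s n : reduced s -> reduced (take n s).
Proof. by move=> [cs lf]; split; [exact: consistent_path_take | exact: leaf_free_take]. Qed.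

Lemma reduced_mem_update m v :
  leaf_free m -> consistent_path (rcons m v) -> reduced (mem_update m v).
Proof.
move=> lf cs; rewrite /mem_update; case: trimP => [no_leaf|i [il _ _ _ _]].
  split=> // n i; have [mn|nm] := leqP n (size m).
    by rewrite -cats1 takel_cat //; apply: lf.
  by rewrite take_oversize ?size_rcons // => leaf; apply: no_leaf; exists i.
split; first exact: consistent_path_take.
rewrite -cats1 takel_cat; first exact: leaf_free_take.
by rewrite -ltnS -(size_rcons m v).
Qed.

Lemma reduced_bounded : winning_strategy E VE w q0 I sigma ->
  exists D, forall s, reduced s -> size s <= D.
Proof.
move=> win; apply: contrapT => unbounded.
have [p p_reduced] : exists p, forall k, reduced (Defs.prefix p k).
  apply: koenig => [s n|D]; first exact: reduced_take.
  apply: contrapT => no_s; apply: unbounded; exists D => s gs.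
  by rewrite leqNgt; apply/negP => Ds; apply: no_s; exists s.
have [play cons] := consistent_path_prefix (fun k => (p_reduced k).1).
have [n [i leaf]] := winning_play_leaf (win.2 p play cons).
by have := (p_reduced n).2 n i; rewrite take_prefix.
Qed.

Definition mem_output (m : seq V) (v : V) : V :=
  let n := mem_update m v in sigma (take (size n).-1 n) v.

Section FiniteMemory.
Variable D : nat.
Hypothesis reduced_le : forall s, reduced s -> size s <= D.

Definition fm_update (m : {bseq D of V}) (v : V) : {bseq D of V} :=
  insub_bseq D (mem_update m v).

Definition fm_strategy : strategy V := fun h v => mem_output (foldl fm_update [bseq] h) v.

Lemma fm_strategy_finite_memory : finite_memory fm_strategy.
Proof. by exists {bseq D of V}, [bseq], fm_update, (fun m : {bseq D of V} => mem_output m). Qed.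

Section Play.
Variable p : nat -> V.
Hypotheses (p_play : is_play E q0 p) (p_cons : consistent VE fm_strategy p).

Definition fm_memory k : seq V := foldl fm_update [bseq] (Defs.prefix p k).

Lemma fm_memoryS k : reduced (mem_update (fm_memory k) (p k)) ->
  fm_memory k.+1 = mem_update (fm_memory k) (p k).
Proof.
by move=> /reduced_le le_D; rewrite /fm_memory prefixS foldl_rcons /fm_update /insub_bseq insubdK.
Qed.

Lemma fm_memory_reduced k :
  reduced (fm_memory k.+1) /\ fm_memory k.+1 = mem_update (fm_memory k) (p k).
Proof.
have step j : leaf_free (fm_memory j) -> consistent_path (rcons (fm_memory j) (p j)) ->
    reduced (fm_memory j.+1) /\ fm_memory j.+1 = mem_update (fm_memory j) (p j).
  by move=> lf cs; have g := reduced_mem_update lf cs; rewrite fm_memoryS.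
elim: k => [|k [[cs lf] mem_k]]; apply: step => //.
- by move=> n i; case: n => [|n] [].
- by split=> [|[]] //=; case: p_play.
apply: consistent_path_rcons => //; rewrite mem_k ?mem_update_neq0 // last_mem_update.
  exact: p_play.2.
by move=> /p_cons ->.
Qed.

Lemma fm_memory_weight k : path_weight (fm_memory k.+1) = partial_weight w p k.
Proof.
elim: k => [|k IH]; rewrite (fm_memory_reduced _).2.
  by rewrite /mem_update path_weight_trim /path_weight /partial_weight !big_ord0.
rewrite path_weight_mem_update; last by rewrite (fm_memory_reduced k).2 mem_update_neq0.
by rewrite IH (fm_memory_reduced k).2 last_mem_update /partial_weight big_ord_recr.
Qed.

End Play.

Lemma fm_strategy_winning : is_strategy E VE sigma ->
  winning_strategy E VE w q0 I fm_strategy.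
Proof.
move=> sigma_edge; split=> [h v vE|p p_play p_cons]; first exact: sigma_edge.
have [m mI m_min] := bounded_memory_eventual_min (s := fun k => fm_memory p k.+1)
  (x := fun k => p k.+1) (fun k => reduced_le (fm_memory_reduced p_play p_cons k).1)
  (fun k => (fm_memory_reduced p_play p_cons k.+1).2).
exists m%:~R%R; split => //; apply: limn_einf_int.
rewrite (_ : _ \o _ = partial_weight w p) in m_min => //.
by apply: funext => k /=; exact: fm_memory_weight.
Qed.

End FiniteMemory.

End Game.

Theorem mainTheorem18 (R : realType) (V : finType) (E : rel V) (VE : {set V})
  (w : V -> V -> int) (q0 : V) (I : interval R)
  (Hout : forall v : V, exists u : V, E v u) :
  (exists sigma : strategy V, winning_strategy E VE w q0 I sigma) ->
  exists sigma : strategy V, winning_strategy E VE w q0 I sigma /\ finite_memory sigma.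
Proof.
move=> [sigma win]; have [D reduced_le] := reduced_bounded win.
eexists; split; first exact: (fm_strategy_winning reduced_le win.1).
exact: fm_strategy_finite_memory.
Qed.
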